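(* For $n\geq 3$, there is no u-p-word for $n$-permutations containing exactly one occurrence of $\Diamond$.
   Context: An $n$-permutation is a permutation of $\{1,\ldots,n\}$. For a word $w$ of distinct numbers, $\mathrm{red}(w)$ is obtained by replacing the $i$-th smallest letter by $i$. Let $\Diamond$ be a symbol not among the integers. A word $f_1\cdots f_n$ over the positive integers together with $\Diamond$, whose integer letters are pairwise distinct, covers an $n$-permutation $\pi$ if one can substitute real numbers for the occurrences of $\Diamond$ (independently) so that the resulting word has $n$ pairwise distinct entries and reduces to $\pi$; equivalently, $f_i<f_j\iff\pi_i<\pi_j$ for all positions $i,j$ holding integers. A u-p-word for $n$-permutations is a word $u_1\cdots u_N$, $N\geq n$, over this alphabet containing at least one $\Diamond$, such that every factor $u_i\cdots u_{i+n-1}$ ($1\leq i\leq N-n+1$) has pairwise distinct integer letters and every $n$-permutation is covered by exactly one of these factors. *)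

From mathcomp Require Import all_boot all_fingroup.
Set Implicit Arguments. Unset Strict Implicit. Unset Printing Implicit Defensive.

(* Letters: [Some k] is the integer letter k, [None] is the symbol Diamond. *)
Definition letter := option nat.
Definition word := seq letter.

Definition factor (w : word) (n i : nat) : word := take n (drop i w).

Definition distinct_ints (f : word) : bool := uniq (pmap id f).

(* f (of length n) covers the n-permutation p: for all positions i, j holding
   integers, f_i < f_j <-> p_i < p_j.  (Permutations of 'I_n = {0..n-1}
   instead of {1..n}; only relative order matters.) *)
Definition covers (n : nat) (f : word) (p : 'S_n) : Prop :=
  forall (i j : 'I_n) (a b : nat),
    nth None f i = Some a -> nth None f j = Some b ->
    (a < b) = (p i < p j).

Definition is_upword (n : nat) (w : word) : Prop :=
  [/\ n <= size w,
      None \in w,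
      (forall k, Some k \in w -> 0 < k),
      (forall i, i <= size w - n -> distinct_ints (factor w n i))
    & (forall p : 'S_n, exists! i, i <= size w - n /\ covers (factor w n i) p)].

(* Let d be the position of the Diamond.  If every factor contains it, each factor covers at most
   n permutations (one per value at d), too few for all n! of them.  Otherwise, up to reversing
   the word, the factor starting at d exists; let x be the n-1 letters that follow the Diamond and
   consider the n permutations whose first n-1 entries are order-isomorphic to x.  If one of them
   is covered by the factor at i > 0, prepending the letter at i-1 gives a permutation covered both
   by the factor at i-1 and by the factor at d, so i = d+1.  Hence all n are covered by the
   factors at 0 and d+1.  The factor at d+1 has no Diamond and covers at most one permutation;
   the factor at 0 covers at most two of them, at most one if d = 0, and none if d = n-1 and the
   factor at d+1 exists (if it does not, every factor contains the Diamond again).  This forces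
   n <= 3, and for n = 3, 0 < d, the factors at d-1 and d have a common covered permutation. *)

From mathcomp Require Import all_boot all_fingroup zify.
Set Implicit Arguments. Unset Strict Implicit. Unset Printing Implicit Defensive.

Lemma lt_of_consecutive (g : nat -> nat) m b :
  (forall t u, t < m -> u < m -> g t = g u -> t = u) ->
  (forall k, k.+1 < m -> (g k < g k.+1) = b) ->
  forall t u, t < u -> u < m -> (g t < g u) = b.
Proof.
move=> g_inj g_step t u tu; elim: u tu => [//|u IHu]; rewrite ltnS leq_eqVlt.
case/orP => [/eqP <-|tu um]; first exact: g_step.
have gtu := IHu tu (ltnW um); have gu := g_step u um.
have neq_u : g u != g u.+1 by apply/eqP => /g_inj; lia.
have neq_t : g t != g u by apply/eqP => /g_inj; lia.
case: b {IHu g_step} gtu gu => [|/negbT gtu /negbT gu]; first exact: ltn_trans.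
by apply/negbTE; move: gtu gu; rewrite -!leqNgt; lia.
Qed.

Section PermNat.
Variable n' : nat.
Local Notation n := n'.+1.

(* Arguments [t >= n] are junk: [inord t = 0]. *)
Definition pnat (p : 'S_n) (t : nat) : nat := p (inord t).

Lemma pnat_inj (p : 'S_n) t u : t < n -> u < n -> pnat p t = pnat p u -> t = u.
Proof.
move=> tn un /val_inj /perm_inj /(congr1 val).
by rewrite /= !inordK.
Qed.

Lemma pnat_ltNgt (p : 'S_n) t u : t < n -> u < n -> t != u ->
  (pnat p t < pnat p u) = ~~ (pnat p u < pnat p t).
Proof.
move=> tn un tu; case: ltngtP => // /pnat_inj e.
by rewrite e ?eqxx in tu.
Qed.

Lemma eq_perm_pnat (p q : 'S_n) : (forall t, t < n -> pnat p t = pnat q t) -> p = q.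
Proof.
move=> pq; apply/permP => x; apply: val_inj.
by have := pq x (ltn_ord x); rewrite /pnat inord_val.
Qed.

Lemma pnat_rank (p : 'S_n) t : t < n ->
  pnat p t = #|[pred s : 'I_n | pnat p s < pnat p t]|.
Proof.
move=> tn; set k := pnat p t.
have kn : k <= n by apply/ltnW/ltn_ord.
have -> : #|[pred s : 'I_n | pnat p s < k]| = #|p @^-1: [set x : 'I_n | x < k]|.
  by apply: eq_card => s; rewrite !inE /pnat inord_val.
rewrite card_preimset; last exact: perm_inj.
have widen_inj : injective (widen_ord kn) by move=> i j /(congr1 val) /= /val_inj.
rewrite -[LHS]card_ord -(card_image widen_inj); apply: eq_card => x.
rewrite inE; apply/imageP/idP => [[i _ ->]|xk]; first exact: (ltn_ord i).
by exists (Ordinal xk) => //; apply: val_inj.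
Qed.

Lemma eq_perm_pattern (p q : 'S_n) :
  (forall t u, t < u -> u < n -> (pnat p t < pnat p u) = (pnat q t < pnat q u)) ->
  p = q.
Proof.
move=> pq; apply: eq_perm_pnat => t tn.
rewrite (pnat_rank p tn) (pnat_rank q tn); apply: eq_card => s; rewrite !inE.
have sn := ltn_ord s.
case: (ltngtP s t) => [st|ts|->]; first exact: pq.
  by rewrite pnat_ltNgt ?gtn_eqF // [RHS]pnat_ltNgt ?gtn_eqF // pq.
by rewrite !ltnn.
Qed.

Lemma eq_perm_value_pattern (p q : 'S_n) j : j < n -> pnat p j = pnat q j ->
  (forall t u, t < n -> u < n -> t != j -> u != j ->
     (pnat p t < pnat p u) = (pnat q t < pnat q u)) -> p = q.
Proof.
move=> jn pq_j pq; apply: eq_perm_pnat => t tn.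
have [->//|tj] := eqVneq t j.
pose K r := #|[pred s : 'I_n | (s != inord j :> 'I_n) && (pnat r s < pnat r t)]|.
have Kpq : K p = K q.
  apply: eq_card => s; rewrite !inE; have [//|sj] := eqVneq s (inord j).
  have sj' : (s : nat) != j.
    by apply: contra_neq sj => e; apply: val_inj; rewrite /= inordK // e.
  by rewrite pq.
have rank_split r : pnat r t = (pnat r j < pnat r t) + K r.
  by rewrite {1}(pnat_rank r tn) (cardD1 (inord j)) !inE /pnat inordK.
have Ep := rank_split p; have Eq := rank_split q.
rewrite Kpq pq_j in Ep.
have neq_p : pnat p t != pnat q j by rewrite -pq_j; apply: contra_neq tj; apply: pnat_inj.
have neq_q : pnat q t != pnat q j by apply: contra_neq tj; apply: pnat_inj.
move: neq_p neq_q Ep Eq; case: ltnP; case: ltnP; lia.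
Qed.

Lemma eq_perm_consecutive (p q : 'S_n) b :
  (forall k, k.+1 < n -> (pnat p k < pnat p k.+1) = b) ->
  (forall k, k.+1 < n -> (pnat q k < pnat q k.+1) = b) -> p = q.
Proof.
move=> p_step q_step; apply: eq_perm_pattern => t u tu un.
have inj r : forall t u, t < n -> u < n -> pnat r t = pnat r u -> t = u by apply: pnat_inj.
by rewrite (lt_of_consecutive (inj p) p_step tu un) (lt_of_consecutive (inj q) q_step tu un).
Qed.

Section PermOfPattern.
Variable v : nat -> nat.
Hypothesis v_inj : forall t u, t < n -> u < n -> v t = v u -> t = u.

Definition rank_of (x : nat) := #|[pred s : 'I_n | v s < v x]|.

Lemma rank_of_lt x : x < n -> rank_of x < n.
Proof.
move=> xn; rewrite -[n]card_ord; apply: proper_card; apply/properP.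
by split; [apply/subsetP | exists (Ordinal xn); rewrite ?inE /= ?ltnn].
Qed.

Lemma rank_of_ltE x y : x < n -> y < n -> (rank_of x < rank_of y) = (v x < v y).
Proof.
move=> xn yn; case: (ltnP (v x) (v y)) => vxy.
  rewrite /rank_of (cardD1 (Ordinal xn) [pred s : 'I_n | v s < v y]) inE /= vxy.
  rewrite add1n ltnS; apply: subset_leq_card; apply/subsetP => s; rewrite !inE => vsx.
  by rewrite (ltn_trans vsx vxy) andbT; apply: contraTneq vsx => ->; rewrite ltnn.
apply/negbTE; rewrite -leqNgt; apply: subset_leq_card; apply/subsetP => s.
by rewrite !inE => vsy; apply: leq_trans vsy vxy.
Qed.

Definition rank_fun (x : 'I_n) : 'I_n := inord (rank_of x).

Lemma rank_fun_inj : injective rank_fun.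
Proof.
move=> x y /(congr1 val); rewrite /= !inordK ?rank_of_lt // => rxy.
have := rank_of_ltE (ltn_ord x) (ltn_ord y); have := rank_of_ltE (ltn_ord y) (ltn_ord x).
rewrite rxy ltnn => vyx vxy; apply: ord_inj; apply: v_inj => //.
by move: vxy vyx; case: ltngtP.
Qed.

Definition perm_of : 'S_n := perm rank_fun_inj.

Lemma perm_of_lt t u : t < n -> u < n -> (pnat perm_of t < pnat perm_of u) = (v t < v u).
Proof.
move=> tn un; rewrite /pnat !permE /rank_fun /= !inordK ?rank_of_lt //.
exact: rank_of_ltE.
Qed.

End PermOfPattern.
End PermNat.

Lemma count_mem1_index (T : eqType) (x x0 : T) (s : seq T) t :
  count_mem x s = 1 -> t < size s -> nth x0 s t = x -> t = index x s.
Proof.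
move=> s_x ts st_x; have x_s : x \in s by rewrite -st_x mem_nth.
have := index_nth x0 ts; rewrite st_x leq_eqVlt => /orP [/eqP //| xt].
have x_take : x \in take t s.
  by rewrite -{1}(nth_index x0 x_s) -(nth_take x0 xt) mem_nth // size_take ts.
have x_drop : x \in drop t s.
  by rewrite -st_x -[t in nth _ _ t]addn0 -nth_drop mem_nth // size_drop subn_gt0.
move: s_x x_take x_drop; rewrite -(cat_take_drop t s) count_cat -!has_pred1 !has_count.
by rewrite take_cat drop_cat size_take ts ltnn subnn take0 drop0 cats0; lia.
Qed.

Lemma pmap_rev (T U : Type) (f : T -> option U) (s : seq T) :
  pmap f (rev s) = rev (pmap f s).
Proof.
elim: s => //= x s IHs; rewrite rev_cons -cats1 pmap_cat IHs /=.
by case: (f x) => [a|] /=; rewrite ?rev_cons ?cats1 ?cats0.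
Qed.

Lemma distinct_ints_nth (f : word) t u a : distinct_ints f -> t < size f -> u < size f ->
  nth None f t = Some a -> nth None f u = Some a -> t = u.
Proof.
elim: f t u => [|x f IHf] [|t] [|u] //= f_uniq tf uf ft fu.
- by move: f_uniq; rewrite /distinct_ints ft /= mem_pmap map_id -fu mem_nth.
- by move: f_uniq; rewrite /distinct_ints fu /= mem_pmap map_id -ft mem_nth.
- congr S; apply: (IHf t u) => //; move: f_uniq.
  by case: x => [b|] //= /andP [].
Qed.

Lemma nth_factor (w : word) n i t : t < n ->
  nth None (factor w n i) t = nth None w (i + t).
Proof. by move=> tn; rewrite /factor nth_take // nth_drop. Qed.

Lemma size_factor (w : word) n i : i + n <= size w -> size (factor w n i) = n.
Proof. by move=> inw; rewrite /factor size_take size_drop; case: ltnP; lia. Qed.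

Lemma factor_pred (w : word) n i : 0 < i -> i <= size w ->
  factor w n.+1 i.-1 = take n.+1 (nth None w i.-1 :: factor w n.+1 i).
Proof.
case: i => // i _ iw; rewrite /factor (drop_nth None) //=.
by rewrite take_takel.
Qed.

Lemma factor_rev (w : word) n i : i + n <= size w ->
  factor (rev w) n i = rev (factor w n (size w - n - i)).
Proof.
move=> inw; rewrite /factor drop_rev take_rev size_take take_drop.
have -> : n + (size w - n - i) = size w - i by lia.
by case: ifP => h; congr (rev (drop _ _)); lia.
Qed.

Section Covers.
Variable n' : nat.
Local Notation n := n'.+1.

Lemma covers_natP (f : word) (p : 'S_n) :
  covers f p <-> forall t u a b, t < n -> u < n ->
    nth None f t = Some a -> nth None f u = Some b -> (a < b) = (pnat p t < pnat p u).
Proof.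
split=> [cov t u a b tn un|cov i j a b].
  by have := cov (inord t) (inord u) a b; rewrite !inordK.
by have := cov i j a b (ltn_ord i) (ltn_ord j); rewrite /pnat !inord_val.
Qed.

Definition coversb (f : word) (p : 'S_n) : bool :=
  [forall i : 'I_n, forall j : 'I_n,
     if (nth None f i, nth None f j) is (Some a, Some b) then (a < b) == (p i < p j)
     else true].

Lemma coversP f p : reflect (covers f p) (coversb f p).
Proof.
apply: (iffP forallP) => [cov i j a b fi fj|cov i].
  by have := forallP (cov i) j; rewrite fi fj => /eqP.
apply/forallP => j; case fi: (nth None f i) => [a|] //; case fj: (nth None f j) => [b|] //.
by rewrite (cov i j a b fi fj).
Qed.

Lemma eq_covers (f g : word) (p : 'S_n) :
  (forall t, t < n -> nth None f t = nth None g t) -> covers f p -> covers g p.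
Proof.
move=> fg /covers_natP cov; apply/covers_natP => t u a b tn un.
by rewrite -!fg //; apply: cov.
Qed.

Lemma covers_take (f : word) (p : 'S_n) : covers (take n f) p <-> covers f p.
Proof. by split; apply: eq_covers => t tn; rewrite nth_take. Qed.

Lemma covers_lt_agree (f : word) (p q : 'S_n) t u : t < n -> u < n ->
  nth None f t != None -> nth None f u != None -> covers f p -> covers f q ->
  (pnat p t < pnat p u) = (pnat q t < pnat q u).
Proof.
move=> tn un; case ft: (nth None f t) => [a|] //; case fu: (nth None f u) => [b|] // _ _.
by move=> /covers_natP cov_p /covers_natP cov_q; rewrite -(cov_p t u a b) // -(cov_q t u a b).
Qed.

Lemma covers_inj (f : word) (p q : 'S_n) :
  (forall t, t < n -> nth None f t != None) -> covers f p -> covers f q -> p = q.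
Proof.
move=> f_int cov_p cov_q; apply: eq_perm_pattern => t u tu un.
have tn := ltn_trans tu un.
exact: covers_lt_agree (f_int t tn) (f_int u un) cov_p cov_q.
Qed.

Lemma covers_value_inj (f : word) (p q : 'S_n) j : j < n ->
  (forall t, t < n -> t != j -> nth None f t != None) ->
  covers f p -> covers f q -> pnat p j = pnat q j -> p = q.
Proof.
move=> jn f_int cov_p cov_q pq_j; apply: (eq_perm_value_pattern jn pq_j) => t u tn un tj uj.
exact: covers_lt_agree (f_int t tn tj) (f_int u un uj) cov_p cov_q.
Qed.

Lemma covers_exists (f : word) :
  (forall t, t < n -> nth None f t != None) -> distinct_ints (take n f) ->
  exists p : 'S_n, covers f p.
Proof.
move=> f_int f_uniq; pose v t := odflt 0 (nth None f t).
have f_v t : t < n -> nth None f t = Some (v t).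
  by move=> tn; rewrite /v; case: (nth None f t) (f_int t tn).
have v_inj t u : t < n -> u < n -> v t = v u -> t = u.
  move=> tn un vtu; have sf : n <= size f.
    by rewrite leqNgt; apply/negP => fn; have := f_int _ fn; rewrite nth_default.
  apply: (distinct_ints_nth (a := v t) f_uniq); rewrite ?size_take_min ?nth_take ?f_v ?vtu //; lia.
exists (perm_of v_inj); apply/covers_natP => t u a b tn un.
by rewrite !f_v // => -[<-] [<-]; rewrite perm_of_lt.
Qed.

(* The new first value is placed just above every [pnat p u] whose letter is below [c]. *)
Lemma covers_cons (c : letter) (f : word) (p : 'S_n) :
  distinct_ints (take n (c :: f)) -> covers f p ->
  exists r : 'S_n, covers (c :: f) r /\
    forall t u, t < n' -> u < n' -> (pnat r t.+1 < pnat r u.+1) = (pnat p t < pnat p u).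
Proof.
move=> cf_uniq /covers_natP cov_p.
pose below (u : 'I_n') := if (nth None f u, c) is (Some b, Some a) then b < a else false.
pose m := \max_(u : 'I_n' | below u) (pnat p u).+1.
pose v t := if t is t'.+1 then (pnat p t').*2.+1 else m.*2.
have v_inj t u : t < n -> u < n -> v t = v u -> t = u.
  case: t u => [|t] [|u] //= tn un; try lia.
  by move=> e; congr S; apply: (pnat_inj (p := p)); lia.
exists (perm_of v_inj); split=> [|t u tn un]; last by rewrite !perm_of_lt //= ltnS; lia.
have c_fresh a u b : c = Some a -> u < n' -> nth None f u = Some b -> a != b.
  move=> ca un fu; have uf : u < size f.
    by rewrite ltnNge; apply/negP => /(nth_default None); rewrite fu.
  move: cf_uniq; rewrite /distinct_ints ca /= => /andP [a_notin _].
  apply: contraNneq a_notin => ->; rewrite mem_pmap map_id -fu -(nth_take None un).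
  by rewrite mem_nth // size_take_min leq_min un uf.
have m_le a u b : c = Some a -> u < n' -> nth None f u = Some b -> (m <= pnat p u) = (a < b).
  move=> ca un fu; have := c_fresh a u b ca un fu.
  case: ltngtP => // [ab|ba] _.
    apply/bigmax_leqP => s; rewrite /below ca; case fs: (nth None f s) => [b'|] // b'a.
    by rewrite -(cov_p _ _ _ _ (ltnW (ltn_ord s)) (ltnW un) fs fu); apply: ltn_trans ab.
  apply/negbTE; rewrite -ltnNge.
  apply: (@leq_bigmax_cond _ below (fun u : 'I_n' => (pnat p u).+1) (Ordinal un)).
  by rewrite /below /= fu ca.
apply/covers_natP => -[|t] [|u] a b tn un /=; rewrite !perm_of_lt //=.
- by move=> -> [->]; rewrite !ltnn.
- by move=> ca fu; rewrite -(m_le a u b) //; lia.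
- move=> ft cb; have := m_le b t a cb tn ft.
  by have := c_fresh b t a cb tn ft; case: ltngtP; lia.
- by move=> ft fu; rewrite (cov_p t u a b) //; lia.
Qed.

Definition rev_perm (p : 'S_n) : 'S_n := perm (inj_comp (@perm_inj _ p) (@rev_ord_inj n)).

Lemma pnat_rev_perm (p : 'S_n) t : t < n -> pnat (rev_perm p) t = pnat p (n' - t).
Proof.
move=> tn; rewrite /pnat permE /=; congr (nat_of_ord (p _)).
by apply: val_inj; rewrite /= !inordK //; lia.
Qed.

Lemma covers_rev (f : word) (p : 'S_n) : size f = n ->
  covers (rev f) p -> covers f (rev_perm p).
Proof.
move=> sf /covers_natP cov; apply/covers_natP => t u a b tn un ft fu.
have rev_nth s : s < n -> nth None (rev f) (n' - s) = nth None f s.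
  by move=> sn; rewrite nth_rev sf; [congr nth; lia | lia].
by rewrite !pnat_rev_perm //; apply: cov; rewrite ?rev_nth //; lia.
Qed.

Lemma covers_revK (f : word) (p : 'S_n) : size f = n ->
  covers f (rev_perm p) -> covers (rev f) p.
Proof.
move=> sf cov; have <- : rev_perm (rev_perm p) = p.
  by apply: eq_perm_pnat => t tn; rewrite !pnat_rev_perm ?subKn //; lia.
by apply: covers_rev; rewrite ?size_rev ?revK.
Qed.

End Covers.

Lemma upword_rev n' (w : word) : is_upword n'.+1 w -> is_upword n'.+1 (rev w).
Proof.
case=> nw diamond_w w_pos w_distinct w_cover; split; rewrite ?size_rev ?mem_rev //.
- by move=> k; rewrite mem_rev; apply: w_pos.
- move=> i iM; rewrite factor_rev /distinct_ints ?pmap_rev ?rev_uniq; last by lia.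
  by apply: w_distinct; lia.
move=> p; have [j [[jM cov_j] j_uniq]] := w_cover (rev_perm p).
have factor_revE i : i <= size w - n'.+1 ->
    factor (rev w) n'.+1 i = rev (factor w n'.+1 (size w - n'.+1 - i)).
  by move=> iM; rewrite factor_rev //; lia.
have size_f i : i <= size w - n'.+1 -> size (factor w n'.+1 (size w - n'.+1 - i)) = n'.+1.
  by move=> iM; rewrite size_factor //; lia.
exists (size w - n'.+1 - j); split.
  split; first exact: leq_subr.
  rewrite factor_revE ?leq_subr //; apply: covers_revK; rewrite ?size_f ?leq_subr //.
  by rewrite subKn.
move=> i [iM cov_i]; rewrite factor_revE // in cov_i.
by have := j_uniq _ (conj (leq_subr _ _) (covers_rev (size_f i iM) cov_i)); lia.
Qed.

Lemma diamond_rev (w : word) d : d < size w ->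
  (forall t, t < size w -> (nth None w t == None) = (t == d)) ->
  forall t, t < size (rev w) -> (nth None (rev w) t == None) = (t == size w - d.+1).
Proof.
move=> dw w_diamond t; rewrite size_rev => tw; rewrite nth_rev //.
(* [nth_rev] states the size at type [option nat], an atom for [lia] distinct from [size w]. *)
change (@size (option nat) w) with (@size letter w).
by rewrite w_diamond; [apply/eqP/eqP | ]; lia.
Qed.

Lemma lt_fact_succ k : 3 <= k -> k.+1 < k`!.
Proof. by case: k => // k k3; rewrite factS; have := fact_geq k; nia. Qed.

Section OneDiamond.
Variable n' : nat.
Local Notation n := n'.+1.
Variables (w : word) (d : nat).
Hypothesis w_up : is_upword n w.
Hypothesis d_lt : d < size w.
Hypothesis w_diamond : forall t, t < size w -> (nth None w t == None) = (t == d).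

Local Notation M := (size w - n).
Local Notation W t := (nth None w t).

Lemma n_le_size : n <= size w. Proof. by case: w_up. Qed.

Lemma W_d : W d = None. Proof. by apply/eqP; rewrite w_diamond ?eqxx. Qed.

Lemma factor_int i t : i <= M -> t < n -> i + t != d -> nth None (factor w n i) t != None.
Proof. by move=> iM tn td; rewrite nth_factor // w_diamond //; have := n_le_size; lia. Qed.

Lemma factor_distinct i : i <= M -> distinct_ints (factor w n i).
Proof. by case: w_up => _ _ _ w_distinct _; apply: w_distinct. Qed.

Lemma upword_cover (p : 'S_n) : exists i, i <= M /\ covers (factor w n i) p.
Proof. by case: w_up => _ _ _ _ /(_ p) [i []]; exists i. Qed.

Lemma cover_index_unique (p : 'S_n) i j : i <= M -> j <= M ->
  covers (factor w n i) p -> covers (factor w n j) p -> i = j.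
Proof.
move=> iM jM cov_i cov_j; case: w_up => _ _ _ _ /(_ p) [k [_ k_uniq]].
by rewrite -(k_uniq i) ?(k_uniq j).
Qed.

Lemma covers_free_factor_inj i (p q : 'S_n) : i <= M -> (d < i) || (i + n <= d) ->
  covers (factor w n i) p -> covers (factor w n i) q -> p = q.
Proof. by move=> iM d_out; apply: covers_inj => t tn; apply: factor_int => //; lia. Qed.

Lemma covers_shift_left i (p : 'S_n) : 0 < i -> i <= M -> covers (factor w n i) p ->
  exists r : 'S_n, covers (factor w n i.-1) r /\
    forall t u, t < n' -> u < n' -> (pnat r t.+1 < pnat r u.+1) = (pnat p t < pnat p u).
Proof.
move=> i_pos iM cov_p; have iw : i <= size w by lia.
have [|r [cov_r shift]] := covers_cons (c := W i.-1) _ cov_p.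
  by rewrite -factor_pred //; apply: factor_distinct; lia.
by exists r; split=> //; rewrite factor_pred //; apply/covers_take.
Qed.

(* When every factor contains the Diamond, a permutation is determined by the factor covering
   it and its value at the Diamond. *)
Lemma fact_le_diamond_factors : M <= d -> d < n -> n`! <= M.+1 * n.
Proof.
move=> Md dn.
pose idx (p : 'S_n) : 'I_M.+1 := odflt ord0 [pick i : 'I_M.+1 | coversb (factor w n i) p].
have cov_idx p : covers (factor w n (idx p)) p.
  rewrite /idx; case: pickP => [i /coversP //|no_cover].
  have [i [iM /coversP cov]] := upword_cover p.
  by have := no_cover (Ordinal (iM : i < M.+1)); rewrite cov.
pose F (p : 'S_n) := (idx p, p (inord (d - idx p))).
suff /leq_card : injective F by rewrite card_Sn card_prod !card_ord.
move=> p q [idx_pq value_pq].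
have iM : idx p <= M by rewrite -ltnS.
have cov_q := cov_idx q; rewrite -idx_pq in cov_q.
apply: (covers_value_inj (j := d - idx p) _ _ (cov_idx p) cov_q); first by lia.
  by move=> t tn tj; apply: factor_int => //; lia.
by rewrite /pnat value_pq idx_pq.
Qed.

Section DiamondStartsFactor.
Hypothesis d_fits : d + n <= size w.

Lemma d_le_M : d <= M. Proof. lia. Qed.

Definition after (s : nat) : nat := odflt 0 (W (d.+1 + s)).

Lemma W_after s : s < n' -> W (d.+1 + s) = Some (after s).
Proof.
move=> sn; rewrite /after; case e: (W (d.+1 + s)) => [a|] //.
by move/eqP: e; rewrite w_diamond; lia.
Qed.

Lemma after_inj s s' : s < n' -> s' < n' -> after s = after s' -> s = s'.
Proof.
move=> sn s'n e.
have := distinct_ints_nth (t := s.+1) (u := s'.+1) (a := after s) (factor_distinct d_le_M).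
rewrite size_factor // !nth_factor ?ltnS // !addnS -!addSn !W_after // e.
by move=> /(_ sn s'n erefl erefl) [].
Qed.

Definition prefix_after (p : 'S_n) :=
  forall t u, t < n' -> u < n' -> (pnat p t < pnat p u) = (after t < after u).

Lemma covers_factor_d (p : 'S_n) :
  covers (factor w n d) p <->
  forall t u, t < n' -> u < n' -> (pnat p t.+1 < pnat p u.+1) = (after t < after u).
Proof.
have W_after' s : s < n' -> nth None (factor w n d) s.+1 = Some (after s).
  by move=> sn; rewrite nth_factor // addnS -addSn W_after.
split=> [/covers_natP cov t u tn un|shift].
  by rewrite (cov t.+1 u.+1 (after t) (after u)) ?W_after'.
apply/covers_natP => -[|t] [|u] a b tn un; rewrite ?W_after' // ?nth_factor ?addn0 ?W_d //.
by move=> -[<-] [<-]; rewrite shift.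
Qed.

(* A cover at [i > 0] shifts to a cover at [i - 1] that is also a cover at [d]. *)
Lemma prefix_after_index (p : 'S_n) i : prefix_after p -> i <= M ->
  covers (factor w n i) p -> i = 0 \/ i = d.+1.
Proof.
case: i => [|i] pre iM cov_p; [by left | right].
have [r [cov_r shift]] := covers_shift_left (isT : 0 < i.+1) iM cov_p.
have /covers_factor_d cov_rd : forall t u, t < n' -> u < n' ->
    (pnat r t.+1 < pnat r u.+1) = (after t < after u) by move=> t u tn un; rewrite shift ?pre.
by rewrite (cover_index_unique (ltnW iM) d_le_M cov_r cov_rd).
Qed.

Definition slot (s : nat) : nat := if s < n' then (after s).+1 else 0.

(* The last value goes just above [after s] for [s < n'], below everything for [s = n']. *)
Definition after_val (s t : nat) : nat := if t < n' then (after t).*2.+1 else (slot s).*2.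

Lemma after_val_inj s t u : t < n -> u < n -> after_val s t = after_val s u -> t = u.
Proof.
move=> tn un; rewrite /after_val -!muln2.
case: (ltnP t n') => tn'; case: (ltnP u n') => un' e; try lia.
by apply: after_inj => //; lia.
Qed.

Definition perm_after (s : nat) : 'S_n := perm_of (@after_val_inj s).

Lemma perm_after_lt s t u : t < n -> u < n ->
  (pnat (perm_after s) t < pnat (perm_after s) u) = (after_val s t < after_val s u).
Proof. exact: perm_of_lt. Qed.

Lemma perm_after_prefix s : prefix_after (perm_after s).
Proof.
move=> t u tn un; rewrite perm_after_lt ?(ltn_trans _ (ltnSn n')) //.
by rewrite /after_val tn un; lia.
Qed.

Lemma perm_after_inj s s' : s < n -> s' < n -> perm_after s = perm_after s' -> s = s'.
Proof.
move=> sn s'n e.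
have slot_cmp t : t < n' -> (after t < slot s) = (after t < slot s').
  move=> tn; have := perm_after_lt s (ltn_trans tn (ltnSn n')) (ltnSn n').
  by rewrite e perm_after_lt ?(ltn_trans tn (ltnSn n')) // /after_val tn ltnn; lia.
have slot_le s1 s2 : (forall t, t < n' -> (after t < slot s1) = (after t < slot s2)) ->
    slot s2 <= slot s1.
  move=> cmp; rewrite {1}/slot; case: ifP => // s2n.
  by rewrite cmp // /slot s2n.
have := slot_le _ _ slot_cmp; have := slot_le s' s (fun t tn => esym (slot_cmp t tn)).
rewrite /slot; case: (ltnP s n') => sn'; case: (ltnP s' n') => s'n' le1 le2; try lia.
by apply: after_inj => //; lia.
Qed.

Definition covered_at i := [set s : 'I_n | (i <= M) && coversb (factor w n i) (perm_after s)].

Lemma card_covered_0_succ : n <= #|covered_at 0| + #|covered_at d.+1|.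
Proof.
apply: leq_trans (_ : #|covered_at 0 :|: covered_at d.+1| <= _); last by rewrite cardsU leq_subr.
rewrite -{1}(card_ord n) -cardsT; apply: subset_leq_card; apply/subsetP => s _.
have [i [iM cov]] := upword_cover (perm_after s).
rewrite !inE; case: (prefix_after_index (perm_after_prefix s) iM cov) => ei; rewrite -ei iM.
  by rewrite (introT (coversP _ _) cov).
by rewrite (introT (coversP _ _) cov) orbT.
Qed.

Lemma card_covered_free i : (d < i) || (i + n <= d) -> #|covered_at i| <= 1.
Proof.
move=> d_out; apply/card_le1_eqP => s s'.
rewrite !inE => /andP [iM /coversP cov] /andP [_ /coversP cov'].
by apply/ord_inj/perm_after_inj => //; exact: covers_free_factor_inj iM d_out cov' cov.
Qed.

(* Only the comparison between positions [d] and [n'] is not fixed by [after] and factor [0]. *)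
Lemma card_covered_0 : d != n' -> #|covered_at 0| <= 2.
Proof.
move=> dn'; pose g (s : 'I_n) := pnat (perm_after s) d < pnat (perm_after s) n'.
suff g_inj : {in covered_at 0 &, injective g}.
  by rewrite -card_bool -(card_in_image g_inj) max_card.
move=> s s'; rewrite !inE => /andP [M0 /coversP cov] /andP [_ /coversP cov'] g_ss'.
apply: ord_inj; apply: perm_after_inj => //; apply: eq_perm_pattern => t u tu un.
have [u'|u_last] := ltnP u n'; first by rewrite !perm_after_prefix //; lia.
have -> : u = n' by lia.
have [->|td] := eqVneq t d; first exact: g_ss'.
by apply: covers_lt_agree cov cov'; rewrite ?factor_int //; lia.
Qed.

(* For [d = 0] factor [0] is factor [d], so the pattern of [after] recurs shifted by one. *)
Lemma card_covered_0_first : 2 <= n' -> d = 0 -> #|covered_at 0| <= 1.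
Proof.
move=> n'2 d0; apply/card_le1_eqP => s s'.
suff steps (r : 'I_n) : r \in covered_at 0 -> forall k, k.+1 < n ->
    (pnat (perm_after r) k < pnat (perm_after r) k.+1) = (after 0 < after 1).
  move=> /steps r_s /steps r_s'; apply/ord_inj/perm_after_inj => //.
  exact: eq_perm_consecutive r_s' r_s.
rewrite inE => /andP [_ /coversP cov].
have /covers_factor_d shift : covers (factor w n d) (perm_after r) by rewrite d0.
have pre := perm_after_prefix r.
elim=> [|k IHk] kn; first by rewrite pre //; lia.
rewrite shift; try lia.
by rewrite -(pre k k.+1) ?IHk //; lia.
Qed.

(* Factor [d.+1] has no Diamond and starts with the letters [after], so any permutation it
   covers is also covered by factor [0]. *)
Lemma covered_at_0_last : d = n' -> d < M -> covered_at 0 = set0.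
Proof.
move=> d_last dM; apply/setP => s; rewrite !inE; apply/negP => /andP [_ /coversP cov].
have [q cov_q] : exists q : 'S_n, covers (factor w n d.+1) q.
  apply: covers_exists => [t tn|]; first by apply: factor_int => //; lia.
  by rewrite /factor take_takel //; apply: factor_distinct.
suff cov_q0 : covers (factor w n 0) q by have := cover_index_unique (leq0n M) dM cov_q0 cov_q.
apply/covers_natP => t u a b tn un; rewrite !nth_factor // !add0n => Wt Wu.
have below_last v c : v < n -> W v = Some c -> v < n'.
  move=> vn Wv; rewrite ltn_neqAle -ltnS vn andbT -d_last.
  by apply/eqP => vd; rewrite vd W_d in Wv.
have tn' := below_last t a tn Wt; have un' := below_last u b un Wu.
move/covers_natP: cov => cov; move/covers_natP: cov_q => cov_q.
rewrite (cov t u a b) ?nth_factor ?add0n // perm_after_prefix //.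
by apply: cov_q; rewrite ?nth_factor ?W_after.
Qed.

(* For [n = 3] the factors [d.-1] and [d] each constrain one comparison, jointly satisfiable. *)
Lemma diamond_pos_n3_absurd : n' = 2 -> 0 < d -> False.
Proof.
move=> n'2 d_pos; have dM : d.-1 <= M by have := d_le_M; lia.
have [a Wa] : exists a, W d.-1 = Some a.
  case e: (W d.-1) => [a|]; first by exists a.
  by move/eqP: e; rewrite w_diamond; lia.
have f_pred : factor w n d.-1 = [:: Some a; None; Some (after 0)].
  apply: (@eq_from_nth _ None); rewrite size_factor ?n'2 //; try lia.
  case=> [|[|[|//]]] _; rewrite nth_factor ?n'2 // ?addn0 //.
    by rewrite addn1 prednK // W_d.
  by rewrite -W_after ?n'2 //; congr nth; lia.
have f_d : factor w n d = [:: None; Some (after 0); Some (after 1)].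
  apply: (@eq_from_nth _ None); rewrite size_factor ?n'2 //; try lia.
  case=> [|[|[|//]]] _ /=; rewrite nth_factor ?n'2 // ?addn0 ?W_d //.
    by rewrite -W_after ?n'2 //; congr nth; lia.
  by rewrite -W_after ?n'2 //; congr nth; lia.
have ab : a != after 0.
  have := factor_distinct dM; rewrite f_pred /distinct_ints /= inE andbT.
  by case: eqP.
have bc : after 0 != after 1 by apply/eqP => /after_inj; lia.
pose v t := if t is 0 then (if a < after 0 then 0 else 3)
            else if t is 1 then (if after 0 < after 1 then 1 else 4) else 2.
have v_inj t u : t < n -> u < n -> v t = v u -> t = u.
  by rewrite n'2; case: t u => [|[|[|t]]] [|[|[|u]]] //=; do ?case: ifP.
pose p := perm_of v_inj.
have cov_pred : covers (factor w n d.-1) p.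
  rewrite f_pred; apply/covers_natP => t u a' b' tn un.
  rewrite /p !perm_of_lt //; move: tn un; rewrite n'2.
  case: t u => [|[|[|t]]] [|[|[|u]]] //= _ _ [<-] [<-] //=; rewrite ?ltnn //; case: ltngtP ab => //.
have cov_d : covers (factor w n d) p.
  rewrite f_d; apply/covers_natP => t u a' b' tn un.
  rewrite /p !perm_of_lt //; move: tn un; rewrite n'2.
  case: t u => [|[|[|t]]] [|[|[|u]]] //= _ _ [<-] [<-] //=; rewrite ?ltnn //; case: ltngtP bc => //.
by have := cover_index_unique dM d_le_M cov_pred cov_d; lia.
Qed.

Lemma diamond_starts_factor_absurd : 2 <= n' -> False.
Proof.
move=> n'_ge2; have covered := card_covered_0_succ.
have succ_le1 : #|covered_at d.+1| <= 1 by apply: card_covered_free; rewrite ltnSn.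
have [d0|d_pos] := posnP d; first by have := card_covered_0_first n'_ge2 d0; lia.
have [n'_eq2|n'_ge3] : n' = 2 \/ 3 <= n' by lia.
  exact: diamond_pos_n3_absurd.
have [d_last|d_not_last] := eqVneq d n'.
  have [dM|Md] := ltnP d M; first by move: covered; rewrite covered_at_0_last // cards0; lia.
  have eM : M = n' by have := d_le_M; lia.
  have := fact_le_diamond_factors Md; rewrite eM factS d_last => /(_ (ltnSn _)).
  by have := lt_fact_succ n'_ge3; nia.
by have := card_covered_0 d_not_last; lia.
Qed.

End DiamondStartsFactor.
End OneDiamond.

Theorem corollary4 (n : nat) (w : word) :
  3 <= n -> is_upword n w -> count_mem None w <> 1.
Proof.
case: n => [//|n'] n_ge3 w_up w1.
have [_ diamond_w _ _ _] := w_up.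
have d_lt : index None w < size w by rewrite index_mem.
have w_diamond t : t < size w -> (nth None w t == None) = (t == index None w).
  by move=> tw; apply/eqP/eqP => [/(count_mem1_index w1 tw) //|->]; rewrite nth_index.
move: (index None w) d_lt w_diamond => d d_lt w_diamond.
have [fits|late] := leqP (d + n'.+1) (size w).
  exact: diamond_starts_factor_absurd w_up d_lt w_diamond fits _.
have [d_ge|early] := leqP n' d.
  have rev_fits : size w - d.+1 + n'.+1 <= size (rev w) by rewrite size_rev; lia.
  have rev_d_lt : size w - d.+1 < size (rev w) by rewrite size_rev; lia.
  exact: diamond_starts_factor_absurd (upword_rev w_up) rev_d_lt (diamond_rev d_lt w_diamond)
    rev_fits _.
have M_lt_d : size w - n'.+1 <= d by lia.
have := fact_le_diamond_factors w_up d_lt w_diamond M_lt_d (ltn_trans early (ltnSn _)).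
by rewrite factS; have := fact_geq n'; nia.
Qed.
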